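(* Let $n,m\in\mathbb{N}$, $t_{\mathrm{end}}>0$, and consider coefficient functions $E,J,R\in C(\mathbb{R}^n,\mathbb{R}^{n,n})$, $z\in C(\mathbb{R}^n,\mathbb{R}^n)$, $B\in C(\mathbb{R}^n,\mathbb{R}^{n,m})$ and a Hamiltonian $\mathcal{H}\in C^1(\mathbb{R}^n,\mathbb{R})$ such that for all $x\in\mathbb{R}^n$: $J(x)=-J(x)^\top$, $R(x)=R(x)^\top$ is positive semidefinite, and $E(x)^\top z(x)=\nabla\mathcal{H}(x)$ (these are the coefficients of the port-Hamiltonian system $E(x)\dot x=(J(x)-R(x))z(x)+B(x)u$, $y=B(x)^\top z(x)$ on $[0,t_{\mathrm{end}}]$). Let $0=t_1<t_2<\dots<t_q=t_{\mathrm{end}}$, and let $(\overline{E},\overline{z})$ be a discrete gradient pair for $(\mathcal{H},E,z)$. Let $\overline{J},\overline{R}\colon\mathbb{R}^n\times\mathbb{R}^n\to\mathbb{R}^{n,n}$ and $\overline{B}\colon\mathbb{R}^n\times\mathbb{R}^n\to\mathbb{R}^{n,m}$ be continuous with $\overline{J}(x,x)=J(x)$, $\overline{R}(x,x)=R(x)$, $\overline{B}(x,x)=B(x)$ for all $x\in\mathbb{R}^n$, with $\overline{J}$ pointwise skew-symmetric and $\overline{R}$ pointwise symmetric positive semidefinite. Let $\breve u^{3/2},\breve u^{5/2},\dots,\breve u^{q-1/2}\in\mathbb{R}^m$ be such that there exists a sequence $(\breve x^1,\dots,\breve x^q)$ in $\mathbb{R}^n$ satisfying, for $k=1,\dots,q-1$,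 $$\overline{E}(\breve x^k,\breve x^{k+1})\breve x^{k+1}=\overline{E}(\breve x^k,\breve x^{k+1})\breve x^{k}+(t_{k+1}-t_k)\overline{B}(\breve x^k,\breve x^{k+1})\breve u^{k+1/2}+(t_{k+1}-t_k)\big(\overline{J}(\breve x^k,\breve x^{k+1})-\overline{R}(\breve x^k,\breve x^{k+1})\big)\overline{z}(\breve x^k,\breve x^{k+1}).$$ Define $\breve y^{k+1/2}:=\overline{B}(\breve x^k,\breve x^{k+1})^\top\overline{z}(\breve x^k,\breve x^{k+1})$. Then every such sequence satisfies, for $k=1,\dots,q-1$, $$\frac{\mathcal{H}(\breve x^{k+1})-\mathcal{H}(\breve x^k)}{t_{k+1}-t_k}=-\overline{z}(\breve x^k,\breve x^{k+1})^\top\overline{R}(\breve x^k,\breve x^{k+1})\overline{z}(\breve x^k,\breve x^{k+1})+\big(\breve y^{k+1/2}\big)^\top\breve u^{k+1/2}\le\big(\breve y^{k+1/2}\big)^\top\breve u^{k+1/2}.$$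
   Context: Let $\mathcal{H}\in C^1(\mathbb{R}^n,\mathbb{R})$, $E\in C(\mathbb{R}^n,\mathbb{R}^{n,n})$ and $z\in C(\mathbb{R}^n,\mathbb{R}^n)$ satisfy $\nabla\mathcal{H}(x)=E(x)^\top z(x)$ for all $x\in\mathbb{R}^n$. A pair $(\overline{E},\overline{z})\in C(\mathbb{R}^n\times\mathbb{R}^n,\mathbb{R}^{n,n})\times C(\mathbb{R}^n\times\mathbb{R}^n,\mathbb{R}^n)$ (i.e. both maps continuous) is called a discrete gradient pair for $(\mathcal{H},E,z)$ if (i) $\overline{E}(x,x)=E(x)$ for all $x\in\mathbb{R}^n$; (ii) $\overline{z}(x,x)=z(x)$ for all $x\in\mathbb{R}^n$; (iii) $\overline{z}(x,\hat x)^\top\overline{E}(x,\hat x)(\hat x-x)=\mathcal{H}(\hat x)-\mathcal{H}(x)$ for all $(x,\hat x)\in\mathbb{R}^n\times\mathbb{R}^n$. *)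

From mathcomp Require Import all_boot all_order all_algebra.
From mathcomp Require Import all_classical all_reals all_analysis.
Set Implicit Arguments. Unset Strict Implicit. Unset Printing Implicit Defensive.
Import Order.TTheory GRing.Theory Num.Theory.
Import numFieldNormedType.Exports.
Local Open Scope ring_scope.

Definition dotv (R : realType) (n : nat) (a b : 'cV[R]_n) : R := (a^T *m b) 0 0.

Definition sym_psd (R : realType) (n : nat) (M : 'M[R]_n) : Prop :=
  M^T = M /\ forall v : 'cV[R]_n, 0 <= (v^T *m M *m v) 0 0.

Definition skew_sym (R : realType) (n : nat) (M : 'M[R]_n) : Prop := M = - M^T.

Definition has_gradient (R : realType) (n : nat)
  (H : 'cV[R]_n -> R) (g : 'cV[R]_n -> 'cV[R]_n) : Prop :=
  forall x, differentiable H x /\ forall v, 'd H x v = dotv (g x) v.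

Definition C1_with_gradient (R : realType) (n : nat)
  (H : 'cV[R]_n -> R) (g : 'cV[R]_n -> 'cV[R]_n) : Prop :=
  has_gradient H g /\ continuous g.

Definition discrete_gradient_pair (R : realType) (n : nat)
  (H : 'cV[R]_n -> R) (E : 'cV[R]_n -> 'M[R]_n) (z : 'cV[R]_n -> 'cV[R]_n)
  (Eb : 'cV[R]_n * 'cV[R]_n -> 'M[R]_n)
  (zb : 'cV[R]_n * 'cV[R]_n -> 'cV[R]_n) : Prop :=
  [/\ continuous Eb, continuous zb,
      (forall x, Eb (x, x) = E x),
      (forall x, zb (x, x) = z x) &
      (forall x xh, dotv (zb (x, xh)) (Eb (x, xh) *m (xh - x)) = H xh - H x)].

From mathcomp Require Import all_boot all_order all_algebra.
From mathcomp Require Import all_classical all_reals all_analysis.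
Set Implicit Arguments. Unset Strict Implicit. Unset Printing Implicit Defensive.
Import Order.TTheory GRing.Theory Num.Theory.
Import numFieldNormedType.Exports.
Local Open Scope ring_scope.

(* Pairing the k-th step of the scheme with zbar(x^k, x^{k+1}): the discrete
   gradient property turns the left side into H(x^{k+1}) - H(x^k), skew-symmetry
   of Jbar kills the Jbar term and Bbar^T zbar is the output y.  The identity is
   purely algebraic. *)

Section DotProduct.
Variables (R : realType) (n : nat).
Implicit Types (a b c : 'cV[R]_n) (M : 'M[R]_n).

Lemma dotvDr a b c : dotv a (b + c) = dotv a b + dotv a c.
Proof. by rewrite /dotv mulmxDr mxE. Qed.

Lemma dotvNr a b : dotv a (- b) = - dotv a b.
Proof. by rewrite /dotv mulmxN mxE. Qed.

Lemma dotvZr a b (r : R) : dotv a (r *: b) = r * dotv a b.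
Proof. by rewrite /dotv -scalemxAr mxE. Qed.

Lemma dotv_mulmx (m : nat) a (B : 'M[R]_(n, m)) (v : 'cV[R]_m) :
  dotv a (B *m v) = dotv (B^T *m a) v.
Proof. by rewrite /dotv trmx_mul trmxK mulmxA. Qed.

Lemma dotvC a b : dotv a b = dotv b a.
Proof.
by rewrite /dotv -[in RHS](trmxK (b^T *m a)) trmx_mul trmxK [RHS]mxE.
Qed.

Lemma skew_sym_dotv0 a M : skew_sym M -> dotv a (M *m a) = 0.
Proof.
move=> skewM; have anti : dotv a (M *m a) = - dotv a (M *m a).
  by rewrite {1}skewM mulNmx dotvNr [in RHS]dotv_mulmx dotvC.
by apply/eqP; rewrite -[_ == 0](@mulrn_eq0 _ _ 2) mulr2n {2}anti addrN.
Qed.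

Lemma sym_psd_dotv_ge0 a M : sym_psd M -> 0 <= dotv a (M *m a).
Proof. by case=> _ psdM; rewrite /dotv mulmxA psdM. Qed.

End DotProduct.

Lemma discrete_energy_balance (R : realType) (n m : nat) (H : 'cV[R]_n -> R)
    (Eb J Rm : 'M[R]_n) (B : 'M[R]_(n, m)) (zb x xh : 'cV[R]_n)
    (u : 'cV[R]_m) (h : R) :
  dotv zb (Eb *m (xh - x)) = H xh - H x ->
  skew_sym J ->
  Eb *m xh = Eb *m x + h *: (B *m u) + h *: ((J - Rm) *m zb) ->
  H xh - H x = h * (- dotv zb (Rm *m zb) + dotv (B^T *m zb) u).
Proof.
move=> dgrad skewJ step.
have incr : Eb *m (xh - x) = h *: (B *m u) + h *: ((J - Rm) *m zb).
  by rewrite mulmxBr step addrC addrA addKr.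
rewrite -dgrad incr dotvDr !dotvZr mulmxBl dotvDr dotvNr.
by rewrite (skew_sym_dotv0 zb skewJ) dotv_mulmx sub0r mulrDr addrC.
Qed.

Theorem theorem2 (R : realType) (n m q : nat) (tend : R)
  (E J Rm : 'cV[R]_n -> 'M[R]_n) (z : 'cV[R]_n -> 'cV[R]_n)
  (B : 'cV[R]_n -> 'M[R]_(n, m)) (H : 'cV[R]_n -> R)
  (t : nat -> R)
  (Eb Jb Rb : 'cV[R]_n * 'cV[R]_n -> 'M[R]_n)
  (zb : 'cV[R]_n * 'cV[R]_n -> 'cV[R]_n)
  (Bb : 'cV[R]_n * 'cV[R]_n -> 'M[R]_(n, m))
  (u : nat -> 'cV[R]_m) :
  0 < tend ->
  continuous E -> continuous J -> continuous Rm -> continuous z -> continuous B ->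
  C1_with_gradient H (fun x => (E x)^T *m z x) ->
  (forall x, skew_sym (J x)) ->
  (forall x, sym_psd (Rm x)) ->
  (* time grid 0 = t_1 < t_2 < ... < t_q = tend *)
  t 1%N = 0 -> t q = tend ->
  (forall k, (1 <= k < q)%N -> t k < t k.+1) ->
  discrete_gradient_pair H E z Eb zb ->
  continuous Jb -> continuous Rb -> continuous Bb ->
  (forall x, Jb (x, x) = J x) ->
  (forall x, Rb (x, x) = Rm x) ->
  (forall x, Bb (x, x) = B x) ->
  (forall p, skew_sym (Jb p)) ->
  (forall p, sym_psd (Rb p)) ->
  (* u k stands for u^{k+1/2}, k = 1, ..., q-1; existence of a solution *)
  (exists x : nat -> 'cV[R]_n, forall k, (1 <= k < q)%N ->
     Eb (x k, x k.+1) *m x k.+1 =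
       Eb (x k, x k.+1) *m x k
       + (t k.+1 - t k) *: (Bb (x k, x k.+1) *m u k)
       + (t k.+1 - t k) *: ((Jb (x k, x k.+1) - Rb (x k, x k.+1)) *m zb (x k, x k.+1))) ->
  forall x : nat -> 'cV[R]_n,
    (forall k, (1 <= k < q)%N ->
     Eb (x k, x k.+1) *m x k.+1 =
       Eb (x k, x k.+1) *m x k
       + (t k.+1 - t k) *: (Bb (x k, x k.+1) *m u k)
       + (t k.+1 - t k) *: ((Jb (x k, x k.+1) - Rb (x k, x k.+1)) *m zb (x k, x k.+1))) ->
    forall k, (1 <= k < q)%N ->
      let y := (Bb (x k, x k.+1))^T *m zb (x k, x k.+1) in
      (H (x k.+1) - H (x k)) / (t k.+1 - t k)
        = - dotv (zb (x k, x k.+1)) (Rb (x k, x k.+1) *m zb (x k, x k.+1)) + dotv y (u k)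
      /\ - dotv (zb (x k, x k.+1)) (Rb (x k, x k.+1) *m zb (x k, x k.+1)) + dotv y (u k)
         <= dotv y (u k).
Proof.
move=> _ _ _ _ _ _ _ _ _ _ _ t_incr [_ _ _ _ dgrad] _ _ _ _ _ _ skewJb psdRb
  _ x scheme k k_range y.
have step_neq0 : t k.+1 - t k != 0 by rewrite subr_eq0 gt_eqF ?t_incr.
split.
- rewrite (discrete_energy_balance (dgrad _ _) (skewJb _) (scheme k k_range)).
  by rewrite mulrC mulKf.
- by rewrite gerDr oppr_le0 sym_psd_dotv_ge0.
Qed.
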